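(* Let $\Omega$ be a finite set and let $P=(p_i)_{i\in\Omega}$ and $Q=(q_i)_{i\in\Omega}$ be probability distributions on $\Omega$, both with support $\Omega$. Let $(e_i)_{i\in\Omega}$ be independent $\mathrm{Exp}(1)$ random variables, and set $\tilde{x}=\arg\min_{i\in\Omega} e_i/q_i$ (the drafted token) and $x^{next}=\arg\min_{i\in\Omega} e_i/p_i$. Let $P_{accept}^{(1)}=\Pr[\tilde{x}=x^{next}]$ be the probability that the first drafted token is accepted in exponential race speculative decoding. Then $$1-D_{TV}[P,Q]\;\ge\; P_{accept}^{(1)}\;\ge\; D_{HM}[P,Q],$$ where $D_{TV}[P,Q]=\frac12\sum_{i\in\Omega}|p_i-q_i|$ and $D_{HM}[P,Q]=\sum_{i\in\Omega}\frac{p_iq_i}{p_i+q_i}$.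
   Context: In exponential race speculative decoding, given the context, the draft model's next-token distribution is $Q$ and the target model's next-token distribution is $P$; one drafts the winner of the exponential race under $Q$ and accepts it iff it is also the winner of the race under $P$ driven by the same exponential variables $(e_i)$. *)

From HB Require Import structures.
From mathcomp Require Import all_boot all_order all_algebra.
From mathcomp Require Import all_classical all_reals all_analysis.
Set Implicit Arguments. Unset Strict Implicit. Unset Printing Implicit Defensive.
Import Order.TTheory GRing.Theory Num.Theory.
Local Open Scope classical_set_scope.
Local Open Scope ring_scope.

Definition full_support_distr (R : realType) (Omega : finType) (p : Omega -> R) :=
  (forall i, 0 < p i) /\ \sum_(i : Omega) p i = 1.

(* Mutual independence of a finite family of real random variables:
   product rule for all families of Borel events (taking B_i = setT
   recovers every subfamily). *)
Definition mutually_independent (d : measure_display) (T : measurableType d)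
    (R : realType) (P : probability T R) (I : finType) (X : I -> {RV P >-> R}) :=
  forall B : I -> set R, (forall i, measurable (B i)) ->
    P (\bigcap_(i in [set: I]) (X i @^-1` B i)) =
    (\prod_(i : I) P (X i @^-1` B i))%E.

(* Winner of the exponential race driven by e under weights w:
   argmin_i e_i / w_i (ties, a null event, broken by the library's arg_min
   starting from the default element i0). *)
Definition race_winner (R : realType) (Omega : finType) (i0 : Omega)
    (w : Omega -> R) (e : Omega -> R) : Omega :=
  Order.arg_min i0 xpredT (fun i => e i / w i).

Definition D_TV (R : realType) (Omega : finType) (p q : Omega -> R) : R :=
  2^-1 * \sum_(i : Omega) `|p i - q i|.

Definition D_HM (R : realType) (Omega : finType) (p q : Omega -> R) : R :=
  \sum_(i : Omega) p i * q i / (p i + q i).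

From HB Require Import structures.
From mathcomp Require Import all_boot all_order all_algebra.
From mathcomp Require Import all_classical all_reals all_analysis.
From mathcomp Require Import ring lra.
Set Implicit Arguments. Unset Strict Implicit. Unset Printing Implicit Defensive.
Import Order.TTheory GRing.Theory Num.Theory.
Local Open Scope classical_set_scope.
Local Open Scope ring_scope.

(* Write K = 1 + sum_(j <> i) 1 / c_j.  The event that 0 < e_i < c_j e_j for all
   j <> i has probability 1 / K; only the lower bound is needed, and it is obtained
   without integration: slicing e_i into the intervals ](k+1)δ, (k+2)δ] and using
   independence on the resulting rectangles gives Riemann sums of
   \int_0^oo e^(-tK) dt = 1 / K.  With c_j = w_k / w_j this says that k wins the
   race under w with probability at least w_k, hence exactly w_k since both sides
   sum to 1.  So both races are won by k with probability at most min(p_k, q_k),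
   and these sum to 1 - D_TV; and with probability at least that of k winning with
   the handicaps min(q_k / q_j, p_k / p_j), which is at least
   1 / (1/p_k + 1/q_k) = p_k q_k / (p_k + q_k), and these sum to D_HM. *)

Section expR_riemann_sums.
Variable R : realType.

Lemma expRN_diff_ge (a b : R) : 0 < a -> 0 < b ->
  1 - 2 * a - b^-1 <= expR (- a) * (expR (- a) - expR (- b)).
Proof.
move=> a_gt0 b_gt0; set u := expR (- a); set g := expR (- b).
have g_ge0 : 0 <= g by rewrite ltW ?expR_gt0.
have g_le : g <= b^-1.
  by rewrite /g expRN lef_pV2 ?posrE ?expR_gt0 //; have := expR_ge1Dx b; lra.
have u_le1 : u <= 1 by rewrite /u expR_le1 oppr_le0 ltW.
have uu_ge : 1 - 2 * a <= u * u.
  by rewrite /u -expRD; have := expR_ge1Dx (- a + - a); lra.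
have ug_le : u * g <= g by rewrite ler_piMl.
rewrite mulrBr; lra.
Qed.

Lemma expR_slice_ge (S δ : R) (n : nat) : 0 < δ -> 0 <= S ->
  expR (- (δ * (1 + S))) / (1 + S) *
    (expR (- (n%:R * δ * (1 + S))) - expR (- (n.+1%:R * δ * (1 + S))))
  <= (expR (- (n%:R * δ)) - expR (- (n.+1%:R * δ))) * expR (- (n.+1%:R * δ * S)).
Proof.
move=> δ_gt0 S_ge0; have K_gt0 : 0 < 1 + S by lra.
set E := expR (- (n%:R * δ)); set F := expR (- (n%:R * δ * S)).
set u := expR (- δ); set v := expR (- (δ * S)).
have e1 : expR (- (δ * (1 + S))) = u * v by rewrite -expRD; congr expR; ring.
have e2 : expR (- (n%:R * δ * (1 + S))) = E * F by rewrite -expRD; congr expR; ring.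
have e3 : expR (- (n.+1%:R * δ * (1 + S))) = E * F * (u * v).
  by rewrite -!expRD -natr1; congr expR; ring.
have e4 : expR (- (n.+1%:R * δ)) = E * u by rewrite -expRD -natr1; congr expR; ring.
have e5 : expR (- (n.+1%:R * δ * S)) = F * v by rewrite -expRD -natr1; congr expR; ring.
rewrite e1 e2 e3 e4 e5.
have u_gt0 : 0 < u by apply: expR_gt0.
have EFv_ge0 : 0 <= E * F * v by rewrite !mulr_ge0 // ltW ?expR_gt0.
have uδ_le : u * (1 + δ) <= 1.
  rewrite /u expRN mulrC ler_pdivrMr ?expR_gt0 // mul1r; exact: expR_ge1Dx.
have uv_ge : 1 - δ * (1 + S) <= u * v.
  by rewrite -e1; have := expR_ge1Dx (- (δ * (1 + S))); lra.
have key : u * (1 - u * v) <= (1 - u) * (1 + S) by nra.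
rewrite -subr_ge0.
have -> : (E - E * u) * (F * v) - u * v / (1 + S) * (E * F - E * F * (u * v)) =
    E * F * v / (1 + S) * ((1 - u) * (1 + S) - u * (1 - u * v)).
  by field; lra.
by rewrite mulr_ge0 ?divr_ge0 ?subr_ge0 // ltW.
Qed.

Lemma expR_riemann_sum_ge (S δ : R) (N : nat) : 0 < δ -> 0 <= S ->
  expR (- (δ * (1 + S))) / (1 + S) *
    (expR (- (δ * (1 + S))) - expR (- (N.+1%:R * δ * (1 + S))))
  <= \sum_(k < N) (expR (- (k.+1%:R * δ)) - expR (- (k.+2%:R * δ))) *
                  expR (- (k.+2%:R * δ * S)).
Proof.
move=> δ_gt0 S_ge0; pose h (n : nat) := expR (- (n%:R * δ * (1 + S))).
have -> : expR (- (δ * (1 + S))) - h N.+1 = - \sum_(k < N) (h k.+2 - h k.+1).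
  rewrite -(big_mkord xpredT (fun k => h k.+2 - h k.+1)).
  by rewrite (telescope_sumr (fun k => h k.+1)) // opprB /h mul1r.
rewrite -sumrN mulr_sumr; apply: ler_sum => k _; rewrite opprB.
exact: expR_slice_ge.
Qed.

Lemma inv_le_of_expR_riemann_sums (S x : R) : 0 <= S ->
  (forall δ, 0 < δ -> forall N : nat,
     \sum_(k < N) (expR (- (k.+1%:R * δ)) - expR (- (k.+2%:R * δ))) *
                  expR (- (k.+2%:R * δ * S)) <= x) ->
  (1 + S)^-1 <= x.
Proof.
move=> S_ge0 sum_le; have K_gt0 : 0 < 1 + S by lra.
rewrite -(ler_pM2l K_gt0) mulfV ?gt_eqF //; apply/ler_addgt0Pr => ε ε_gt0.
pose a := ε / 4; have a_gt0 : 0 < a by rewrite divr_gt0.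
pose N := Num.bound (2 / ε / a); set b := N.+1%:R * a.
have b_gt0 : 0 < b by rewrite mulr_gt0 ?ltr0n.
have b_inv : b^-1 <= ε / 2.
  rewrite -[ε / 2]invf_div lef_pV2 ?posrE ?divr_gt0 // -ler_pdivrMr //.
  have bound_ge0 : 0 <= 2 / ε / a by rewrite !divr_ge0 // ltW.
  by apply/ltW/(lt_le_trans (archi_boundP bound_ge0)); rewrite ler_nat.
have δ_gt0 : 0 < a / (1 + S) by rewrite divr_gt0.
have := le_trans (expR_riemann_sum_ge N δ_gt0 S_ge0) (sum_le _ δ_gt0 N).
have -> : a / (1 + S) * (1 + S) = a by rewrite divfK ?gt_eqF.
have -> : N.+1%:R * (a / (1 + S)) * (1 + S) = b by rewrite -mulrA divfK ?gt_eqF.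
rewrite mulrAC ler_pdivrMr // mulrC => riemann.
have := expRN_diff_ge a_gt0 b_gt0.
have a_eq : 2 * a = ε / 2 by rewrite /a; field.
lra.
Qed.

End expR_riemann_sums.

Section real_probability.
Context (R : realType) (d : measure_display) (T : measurableType d).
Variable P : probability T R.

Definition pr (A : set T) : R := fine (P A).

Lemma prE A : measurable A -> P A = (pr A)%:E.
Proof. by move=> mA; rewrite /pr fineK // fin_num_measure. Qed.

Lemma le_pr A B : measurable A -> measurable B -> A `<=` B -> pr A <= pr B.
Proof. by move=> mA mB AB; rewrite -lee_fin -!prE // le_measure // inE. Qed.

Lemma pr_setC A : measurable A -> pr (~` A) = 1 - pr A.
Proof.
move=> mA; apply: EFin_inj; rewrite -prE ?probability_setC ?prE //.
exact: measurableC.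
Qed.

Lemma pr_setD A B : measurable A -> measurable B -> B `<=` A ->
  pr (A `\` B) = pr A - pr B.
Proof.
move=> mA mB BA; apply: EFin_inj; rewrite -prE; last exact: measurableD.
have := setIidr BA; rewrite measureD //; last exact: le_lt_trans (probability_le1 P mA) (ltry 1).
by move=> ->; rewrite EFinB -(prE mA) -(prE mB).
Qed.

Lemma pr_bigcup (I : finType) (F : I -> set T) :
  trivIset setT F -> (forall i, measurable (F i)) ->
  pr (\bigcup_(i in setT) F i) = \sum_(i : I) pr (F i).
Proof.
move=> tF mF; have mU : measurable (\bigcup_(i in setT) F i).
  by apply: fin_bigcup_measurable => //; exact: finite_finset.
apply: EFin_inj; rewrite -(prE mU) measure_fin_bigcup //; last exact: finite_finset.
rewrite -sumEFin (fsbigE (enum I)) ?enum_uniq //; last by move=> i _; rewrite mem_enum.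
rewrite big_enum_cond /=; apply: eq_big => [i | i _]; first by rewrite in_setT.
exact: prE.
Qed.

Section fibers.
Variables (I : finType) (f g : T -> I).
Hypotheses (mf : forall k, measurable (f @^-1` [set k]))
           (mg : forall k, measurable (g @^-1` [set k])).

Lemma pr_fibers_sum : \sum_(k : I) pr (f @^-1` [set k]) = 1.
Proof.
rewrite -pr_bigcup //; last by move=> k l _ _ [t [/= <- <-]].
have -> : \bigcup_(k in setT) f @^-1` [set k] = setT by apply/seteqP; split => // t; exists (f t).
by rewrite /pr probability_setT.
Qed.

Let eq_setE : [set t | f t = g t] =
  \bigcup_(k in setT) (f @^-1` [set k] `&` g @^-1` [set k]).
Proof.
apply/seteqP; split => [t ft|t [k _ [/= -> ->]] //].
by exists (f t) => //; split.
Qed.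

Lemma measurable_eq_fibers : measurable [set t | f t = g t].
Proof.
rewrite eq_setE; apply: fin_bigcup_measurable; first exact: finite_finset.
by move=> k _; apply: measurableI.
Qed.

Lemma pr_eq_fibers : pr [set t | f t = g t] =
  \sum_(k : I) pr (f @^-1` [set k] `&` g @^-1` [set k]).
Proof.
rewrite eq_setE pr_bigcup //; last by move=> k; apply: measurableI.
by move=> k l _ _ [t [[/= <- _] [/= <- _]]].
Qed.

End fibers.
End real_probability.

Section exponential_variable.
Context (R : realType) (d : measure_display) (T : measurableType d).
Variables (P : probability T R) (X : {RV P >-> R}).
Hypothesis X_exp : forall A : set R, measurable A ->
  distribution P X A = exponential_prob 1 A.

Let mX (i : interval R) : measurable (X @^-1` [set` i]).
Proof. by apply: measurable_funPTI; exact: measurable_itv. Qed.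

Let pr_X (i : interval R) :
  pr P (X @^-1` [set` i]) = fine (exponential_prob 1 [set` i]).
Proof. by rewrite -X_exp. Qed.

Lemma pr_exponential_ge0 : pr P (X @^-1` `[0, +oo[) = 1.
Proof.
have -> : X @^-1` `[0, +oo[ = ~` (X @^-1` `]-oo, 0[).
  by rewrite preimage_setC setCitvl.
rewrite pr_setC // pr_X.
rewrite /exponential_prob integral0_eq ?subr0 // => x /=.
by rewrite in_itv /= => /lt0_exponential_pdf ->.
Qed.

Let pr_X_splitD (i : interval R) : (i.1 <= i.2)%O ->
  pr P (X @^-1` [set` i]) =
  pr P (X @^-1` [set` Interval i.1 +oo%O]) - pr P (X @^-1` [set` Interval i.2 +oo%O]).
Proof.
move=> le12; rewrite -pr_setD //; last by move=> t /=; apply: subitvPl.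
by rewrite (set_itv_splitD i) setDE preimage_setI -preimage_setC.
Qed.

Lemma pr_exponential_gt a : 0 < a -> pr P (X @^-1` `]a, +oo[) = expR (- a).
Proof.
move=> a_gt0; have := @pr_X_splitD `[0, a]; rewrite pr_exponential_ge0 pr_X.
rewrite exponential_prob_itv0c // mulN1r /= bnd_simp => /(_ (ltW a_gt0)); lra.
Qed.

Lemma pr_exponential_itvoc a b : 0 < a -> a <= b ->
  pr P (X @^-1` `]a, b]) = expR (- a) - expR (- b).
Proof.
move=> a_gt0 ab; rewrite pr_X_splitD ?bnd_simp //.
by rewrite !pr_exponential_gt // (lt_le_trans a_gt0).
Qed.

End exponential_variable.

Section measurable_comparisons.
Context (R : realType) (d : measure_display) (T : measurableType d).

Lemma measurable_lt (f g : T -> R) :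
  measurable_fun setT f -> measurable_fun setT g -> measurable [set t | f t < g t].
Proof.
move=> mf mg; have := measurable_realfun.measurable_fun_ltr mf mg measurableT (Y := [set true]) I.
by rewrite setTI; congr measurable; apply/seteqP; split => t /=.
Qed.

Lemma measurable_ffun_tests (I : finType) (U : Type) (b : I -> T -> bool)
    (g : {ffun I -> bool} -> U) (u : U) :
  (forall i, measurable_fun setT (b i)) ->
  measurable [set t | g [ffun i => b i t] = u].
Proof.
move=> mb.
have -> : [set t | g [ffun i => b i t] = u] =
    \bigcup_(s in [set s | g s = u]) \bigcap_(i in setT) (b i @^-1` [set s i]).
  apply/seteqP; split => [t /= gu | t [s /= gu bs] /=].
  - by exists [ffun i => b i t] => // i _ /=; rewrite ffunE.
  - suff -> : [ffun i => b i t] = s by [].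
    by apply/ffunP => i; rewrite ffunE; exact: bs.
apply: fin_bigcup_measurable; first exact: finite_finset.
move=> s _; apply: fin_bigcap_measurable; first exact: finite_finset.
by move=> i _; rewrite -[_ @^-1` _]setTI; exact: mb.
Qed.

End measurable_comparisons.

Section race_winner.
Variables (R : realType) (Omega : finType) (i0 : Omega).

Lemma race_winnerE (w F : Omega -> R) :
  race_winner i0 w F = odflt i0 [pick k | [forall j, F k / w k <= F j / w j]].
Proof.
by rewrite /race_winner /Order.arg_min /extremum; congr odflt; apply: eq_pick.
Qed.

Lemma race_winner_eq (w F : Omega -> R) k :
  (forall j, j != k -> F k / w k < F j / w j) -> race_winner i0 w F = k.
Proof.
move=> k_wins; rewrite /race_winner; case: arg_minP => // m _ m_min.
apply/eqP; apply: contraT => m_neq_k.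
by have := m_min k isT; rewrite leNgt k_wins.
Qed.

End race_winner.

Section exponential_race.
Context (R : realType) (d : measure_display) (T : measurableType d).
Variables (P : probability T R) (Omega : finType) (e : Omega -> {RV P >-> R}).

Definition race_event (i : Omega) (c : Omega -> R) : set T :=
  [set t | 0 < e i t /\ forall j, j != i -> e i t < c j * e j t].

Definition race_winner_rv (i0 : Omega) (w : Omega -> R) (t : T) : Omega :=
  race_winner i0 w (fun j => e j t).

Lemma measurable_race_event i c : measurable (race_event i c).
Proof.
have -> : race_event i c = [set t | (fun=> 0) t < e i t] `&`
    \bigcap_(j in [set j | j != i]) [set t | e i t < c j * e j t].
  by apply/seteqP; split => t /= [ei_gt0 ei_lt]; split => // j; exact: ei_lt.
apply: measurableI; first exact: measurable_lt.
apply: fin_bigcap_measurable; first exact: finite_finset.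
by move=> j _; apply: measurable_lt => //; exact: measurable_realfun.measurable_funM.
Qed.

Lemma race_event_mono i (c c' : Omega -> R) :
  (forall j, 0 < c j) -> (forall j, c j <= c' j) ->
  race_event i c `<=` race_event i c'.
Proof.
move=> c_gt0 le_cc' t [ei_gt0 ei_lt]; split => // j ji.
have ej_gt0 : 0 < e j t by rewrite -(pmulr_rgt0 _ (c_gt0 j)) (lt_trans ei_gt0) ?ei_lt.
by rewrite (lt_le_trans (ei_lt j ji)) // ler_pM2r.
Qed.

Lemma race_event_sub_race_winner i0 (w : Omega -> R) k : (forall j, 0 < w j) ->
  race_event k (fun j => w k / w j) `<=` race_winner_rv i0 w @^-1` [set k].
Proof.
move=> w_gt0 t [_ ek_lt]; apply: race_winner_eq => j jk.
by rewrite ltr_pdivrMr // mulrAC [e j t * _]mulrC mulrAC ek_lt.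
Qed.

(* The winner is a function of the finitely many comparisons e_l / w_l <= e_j / w_j. *)
Lemma measurable_race_winner_fiber i0 w k : measurable (race_winner_rv i0 w @^-1` [set k]).
Proof.
pose b (jl : Omega * Omega) t := e jl.1 t / w jl.1 <= e jl.2 t / w jl.2.
pose g (s : {ffun Omega * Omega -> bool}) := odflt i0 [pick l | [forall j, s (l, j)]].
have -> : race_winner_rv i0 w @^-1` [set k] = [set t | g [ffun jl => b jl t] = k].
  apply/seteqP; split => t; rewrite /= /race_winner_rv race_winnerE /g;
    by congr (odflt _ _ = _); apply: eq_pick => l /=; apply: eq_forallb => j; rewrite ffunE.
apply: measurable_ffun_tests => jl.
by apply: measurable_realfun.measurable_fun_ler; exact: measurable_realfun.measurable_funM.
Qed.

Hypothesis e_indep : mutually_independent e.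
Hypothesis e_exp : forall i (A : set R), measurable A ->
  distribution P (e i) A = exponential_prob 1 A.

Lemma pr_bigcap_independent (B : Omega -> set R) : (forall j, measurable (B j)) ->
  pr P (\bigcap_(j in [set: Omega]) e j @^-1` B j) = \prod_j pr P (e j @^-1` B j).
Proof.
move=> mB; apply: EFin_inj; rewrite -prE; last first.
  apply: fin_bigcap_measurable; first exact: finite_finset.
  by move=> j _; exact: measurable_funPTI.
rewrite e_indep // -prodEFin; apply: eq_bigr => j _.
by rewrite -prE //; exact: measurable_funPTI.
Qed.

Variables (i : Omega) (c : Omega -> R).
Hypothesis c_gt0 : forall j, 0 < c j.

Let S := \sum_(j | j != i) (c j)^-1.

Let S_ge0 : 0 <= S.
Proof. by apply: sumr_ge0 => j _; rewrite invr_ge0 ltW. Qed.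

Definition race_slice (s t : R) : set T :=
  \bigcap_(j in [set: Omega])
    e j @^-1` (if j == i then `]s, t]%classic else `]t / c j, +oo[%classic).

Lemma measurable_race_slice s t : measurable (race_slice s t).
Proof.
apply: fin_bigcap_measurable; first exact: finite_finset.
by move=> j _; apply: measurable_funPTI; case: ifP.
Qed.

Lemma race_slice_sub s t : 0 <= s -> race_slice s t `<=` race_event i c.
Proof.
move=> s_ge0 w slice; have := slice i I; rewrite /= eqxx /= in_itv /= => /andP[ei_gt ei_le].
split=> [|j ji]; first exact: le_lt_trans ei_gt.
have := slice j I; rewrite /= (negbTE ji) /= in_itv /= andbT ltr_pdivrMr // mulrC.
exact: le_lt_trans.
Qed.

Lemma pr_race_slice s t : 0 < s -> s <= t ->
  pr P (race_slice s t) = (expR (- s) - expR (- t)) * expR (- (t * S)).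
Proof.
move=> s_gt0 st; rewrite pr_bigcap_independent; last by move=> j; case: ifP.
rewrite (bigD1 i) //= eqxx (pr_exponential_itvoc (e_exp i)) //; congr (_ * _).
rewrite /S mulr_sumr -sumrN expR_sum; apply: eq_bigr => j ji.
by rewrite (negbTE ji) (pr_exponential_gt (e_exp j)) // divr_gt0 // (lt_le_trans s_gt0).
Qed.

Lemma race_event_ge_riemann δ (N : nat) : 0 < δ ->
  \sum_(k < N) (expR (- (k.+1%:R * δ)) - expR (- (k.+2%:R * δ))) *
               expR (- (k.+2%:R * δ * S)) <= pr P (race_event i c).
Proof.
move=> δ_gt0; pose F (k : 'I_N) := race_slice (k.+1%:R * δ) (k.+2%:R * δ).
have F_disj : trivIset setT F.
  move=> k l _ _ [t [Fk Fl]].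
  have := Fk i I; have := Fl i I; rewrite /= eqxx /= !in_itv /=.
  move=> /andP[l_lt l_le] /andP[k_lt k_le].
  have nat_le m n : m.+1%:R * δ < n.+2%:R * δ -> (m <= n)%N.
    by rewrite ltr_pM2r // ltr_nat ltnS.
  apply/val_inj/eqP; rewrite eqn_leq !nat_le //.
  - exact: lt_le_trans l_lt k_le.
  - exact: lt_le_trans k_lt l_le.
have -> : \sum_(k < N) (expR (- (k.+1%:R * δ)) - expR (- (k.+2%:R * δ))) *
                     expR (- (k.+2%:R * δ * S)) = \sum_(k < N) pr P (F k).
  apply: eq_bigr => k _; rewrite pr_race_slice ?mulr_gt0 ?ler_pM2r ?ler_nat //.
rewrite -pr_bigcup //; last by move=> k; exact: measurable_race_slice.
apply: le_pr; [|exact: measurable_race_event|].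
- apply: fin_bigcup_measurable; first exact: finite_finset.
  by move=> k _; exact: measurable_race_slice.
- by move=> t [k _]; apply: race_slice_sub; rewrite mulr_ge0 // ltW.
Qed.

Lemma pr_race_event_ge : (1 + S)^-1 <= pr P (race_event i c).
Proof.
apply: inv_le_of_expR_riemann_sums S_ge0 _ => δ δ_gt0 N.
exact: race_event_ge_riemann.
Qed.

End exponential_race.

Section race_acceptance.
Context (R : realType) (d : measure_display) (T : measurableType d).
Variables (P : probability T R) (Omega : finType) (i0 : Omega).
Variable e : Omega -> {RV P >-> R}.
Hypothesis e_indep : mutually_independent e.
Hypothesis e_exp : forall i (A : set R), measurable A ->
  distribution P (e i) A = exponential_prob 1 A.

Let fiber (w : Omega -> R) k := race_winner_rv e i0 w @^-1` [set k].

Lemma sum_inv_ratio (w : Omega -> R) k : full_support_distr w ->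
  1 + \sum_(j | j != k) (w k / w j)^-1 = (w k)^-1.
Proof.
move=> [w_gt0 w_sum1]; under eq_bigr do rewrite invf_div.
rewrite -mulr_suml (_ : \sum_(j | j != k) w j = 1 - w k).
  by field; rewrite gt_eqF.
by move: w_sum1; rewrite (bigD1 k) //=; lra.
Qed.

Lemma pr_race_winner (w : Omega -> R) k : full_support_distr w -> pr P (fiber w k) = w k.
Proof.
move=> w_distr; have [w_gt0 w_sum1] := w_distr.
have fiber_ge l : w l <= pr P (fiber w l).
  rewrite -[w l]invrK -(sum_inv_ratio l w_distr).
  have ratio_gt0 j : 0 < w l / w j by rewrite divr_gt0.
  apply: le_trans (pr_race_event_ge e_indep e_exp l ratio_gt0) _.
  apply: le_pr; [exact: measurable_race_event|exact: measurable_race_winner_fiber|].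
  exact: race_event_sub_race_winner.
(* The fibers partition T and w sums to 1, so none of the inequalities is strict. *)
have diff_ge0 l : true -> 0 <= pr P (fiber w l) - w l by rewrite subr_ge0.
have /(psumr_eq0P diff_ge0)/(_ k isT)/eqP : \sum_l (pr P (fiber w l) - w l) = 0.
  by rewrite sumrB (pr_fibers_sum P (measurable_race_winner_fiber e i0 w)) w_sum1 subrr.
by rewrite subr_eq0 => /eqP.
Qed.

Section coupling.
Variables p q : Omega -> R.
Hypotheses (p_distr : full_support_distr p) (q_distr : full_support_distr q).

Let measurable_fibers k : measurable (fiber q k `&` fiber p k).
Proof. by apply: measurableI; exact: measurable_race_winner_fiber. Qed.

Lemma pr_common_winner_le k :
  pr P (fiber q k `&` fiber p k) <= Order.min (q k) (p k).
Proof.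
rewrite le_min -{1}(pr_race_winner k q_distr) -(pr_race_winner k p_distr).
by rewrite !le_pr //; exact: measurable_race_winner_fiber.
Qed.

Lemma pr_common_winner_ge k :
  p k * q k / (p k + q k) <= pr P (fiber q k `&` fiber p k).
Proof.
have [p_gt0 _] := p_distr; have [q_gt0 _] := q_distr.
pose c j := Order.min (q k / q j) (p k / p j).
have c_gt0 j : 0 < c j by rewrite lt_min !divr_gt0.
have race_sub : race_event e k c `<=` fiber q k `&` fiber p k.
  move=> t kt; split; apply: race_event_sub_race_winner => //;
    by apply: race_event_mono kt => // j; rewrite ge_min lexx ?orbT.
apply: le_trans (le_pr P (measurable_race_event e k c) (measurable_fibers k) race_sub).
apply: le_trans (pr_race_event_ge e_indep e_exp k c_gt0).
have inv_c_le j : (c j)^-1 <= (q k / q j)^-1 + (p k / p j)^-1.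
  by rewrite /c /Order.min; case: ifP => _;
    rewrite ?lerDl ?lerDr invr_ge0 ltW // divr_gt0.
have S_le : 1 + \sum_(j | j != k) (c j)^-1 <= (q k)^-1 + (p k)^-1.
  rewrite -(sum_inv_ratio k q_distr) -(sum_inv_ratio k p_distr).
  have : \sum_(j | j != k) (c j)^-1 <=
         \sum_(j | j != k) ((q k / q j)^-1 + (p k / p j)^-1).
    by apply: ler_sum => j _; exact: inv_c_le.
  rewrite big_split /=.
  have : 0 <= \sum_(j | j != k) (p k / p j)^-1.
    by apply: sumr_ge0 => j _; rewrite invr_ge0 ltW // divr_gt0.
  lra.
rewrite (_ : _ / _ = ((q k)^-1 + (p k)^-1)^-1); last first.
  by field; rewrite ?gt_eqF // ?addr_gt0.
have sum_ge0 : 0 <= \sum_(j | j != k) (c j)^-1.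
  by apply: sumr_ge0 => j _; rewrite invr_ge0 ltW.
by rewrite lef_pV2 // posrE; [rewrite addr_gt0 ?invr_gt0 | lra].
Qed.

End coupling.
End race_acceptance.

Lemma sum_min_eq_1_sub_TV (R : realType) (Omega : finType) (p q : Omega -> R) :
  \sum_i p i = 1 -> \sum_i q i = 1 ->
  \sum_i Order.min (q i) (p i) = 1 - D_TV p q.
Proof.
move=> p_sum1 q_sum1.
have min_half_sum i : Order.min (q i) (p i) = 2^-1 * (p i + q i) - 2^-1 * `|p i - q i|.
  by case: (leP (q i) (p i)) => qp; [rewrite ger0_norm | rewrite ler0_norm]; field || lra.
under eq_bigr do rewrite min_half_sum.
by rewrite sumrB -mulr_sumr big_split /= p_sum1 q_sum1 /D_TV -mulr_sumr; field.
Qed.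

Theorem lemma1 (R : realType) (Omega : finType) (i0 : Omega)
    (p q : Omega -> R)
    (hp : full_support_distr p) (hq : full_support_distr q)
    (d : measure_display) (T : measurableType d) (P : probability T R)
    (e : Omega -> {RV P >-> R})
    (hind : mutually_independent e)
    (hexp : forall i (A : set R), measurable A ->
              distribution P (e i) A = exponential_prob 1 A) :
  let P_accept1 :=
    P [set w | race_winner i0 q (fun i => e i w) =
               race_winner i0 p (fun i => e i w)] in
  ((1 - D_TV p q)%:E >= P_accept1)%E /\ (P_accept1 >= (D_HM p q)%:E)%E.
Proof.
move=> P_accept1; have m_fiber := measurable_race_winner_fiber e i0.
rewrite /P_accept1 (prE P (measurable_eq_fibers (m_fiber q) (m_fiber p))) !lee_fin.
rewrite (pr_eq_fibers P (m_fiber q) (m_fiber p)); split.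
- rewrite -(sum_min_eq_1_sub_TV hp.2 hq.2); apply: ler_sum => k _.
  exact: pr_common_winner_le.
- by apply: ler_sum => k _; exact: pr_common_winner_ge.
Qed.
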